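(* In the setting of the context, let $\{\mu_k\}_{k\in\mathbb{N}}$ be a strictly decreasing sequence of positive scalars and $\{w_k\}_{k\in\mathbb{N}}$ a sequence with $\|F^{\mu_k}(w_{k+1})\|\le\epsilon(\mu_k)$ for all $k$, such that for a subsequence indexed by $\mathcal K$, $w_{k+1}\to w^*$ as $k\in\mathcal K\to\infty$. Let $p\in\{1,\dots,d-2\}$. Let $\mathcal E_A\subseteq\mathcal E$ be a set of equality-constraint indices for which there is a constant matrix $A_{\mathcal E_A}\in\mathbb{R}^{|\mathcal E_A|\times n}$ with $A_{\mathcal E_A}(x)=A_{\mathcal E_A}$ for all $x$ (i.e. these equality constraints are affine). Then for all $k\in\mathcal K$ sufficiently large, $c_{\mathcal E_A}(x^{w^*,p}_{k+1})=0$.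
   Context: Problem: minimize $f(x)$ subject to $c_{\mathcal I}(x)\ge0$, $c_{\mathcal E}(x)=0$, with $f,c_i\colon\mathbb{R}^n\to\mathbb{R}$, $c=(c_{\mathcal I}^T,c_{\mathcal E}^T)^T\in\mathbb{R}^m$, and $d\ge3$ the smallest number of times each of $f,c_1,\dots,c_m$ is continuously differentiable. Notation: $g=\nabla f$, $A$ the Jacobian of $c$ (subscripts on $A$ select rows, as for $c$), $H(x,\lambda)$ the Hessian in $x$ of $f(x)-\lambda^Tc(x)$, $[v]_S$ components of $v$ indexed by $S$, uppercase = diagonal matrix of the lowercase vector, $e$ the all-ones vector, $w=(x,\lambda)$ (so $w^{w^*,p}_{k+1}=(x^{w^*,p}_{k+1},\lambda^{w^*,p}_{k+1})$). $F^\mu(x,\lambda)=\bigl(g(x)-A(x)^T\lambda;\ C_{\mathcal I}(x)[\lambda]_{\mathcal I}-\mu e;\ c_{\mathcal E}(x)\bigr)$. Let $x^*$ be a KKT point at which LICQ, strict complementarity (multiplier $\lambda^*$ with $[\lambda^*]_i>0$ for active inequality indices) and the strong second-order sufficiency condition ($p^TH(x^*,\lambda^* )p\ge\omega\|p\|^2$, $\omega>0$, for all $p$ orthogonal to all active constraint gradients) hold; $\lambda^*$ is unique; $w^*=(x^*,\lambda^* )$. Let $w^{w^*,0}$ be the locally unique $(d-1)$ times continuously differentiable function near $0$ with $F^0(w^{w^*,0}(r))=r$, $w^{w^*,0}(0)=w^*$. With $\mathrm{nml}(r)=r/\|r\|$ for $r\ne0$, $\mathrm{nml}(0)=0$, define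 $w^{w^*,\mu,r}(\rho)=w^{w^*,0}\bigl(\rho\,\mathrm{nml}(r)+(0,\mu e^T,0)^T\bigr)$ for $\mu,r$ small. Set $r_{k+1}=F^{\mu_{k+1}}(w_{k+1})$ and let $w^{w^*,p}_{k+1}$ be the value at $\rho=0$ of the $p$th-order Taylor polynomial of $\rho\mapsto w^{w^*,\mu_{k+1},r_{k+1}}(\rho)$ about $\rho=\|r_{k+1}\|$. $\epsilon$ is a positive function with $\epsilon(\mu)=\Theta(\mu)$. *)

From HB Require Import structures.
From mathcomp Require Import all_boot all_order all_algebra.
From mathcomp Require Import all_classical all_reals all_analysis.
Set Implicit Arguments. Unset Strict Implicit. Unset Printing Implicit Defensive.
Import Order.TTheory GRing.Theory Num.Theory.
Import numFieldNormedType.Exports.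
Local Open Scope ring_scope.
Local Open Scope classical_set_scope.

Section Defs.
Context {R : realType}.

Definition norm2 {k : nat} (v : 'rV[R]_k) : R := Num.sqrt (\sum_(i < k) v 0 i ^+ 2).

Definition ebasis {n : nat} (i : 'I_n) : 'rV[R]_n := delta_mx 0 i.

Definition pderiv {n : nat} {V : normedModType R} (i : 'I_n) (f : 'rV[R]_n -> V)
  : 'rV[R]_n -> V := fun x => derive f x (ebasis i).

Definition ipderiv {n : nat} {V : normedModType R} (s : seq 'I_n) (f : 'rV[R]_n -> V)
  : 'rV[R]_n -> V := foldr (fun i g => pderiv i g) f s.

Definition Ck {n : nat} {V : normedModType R} (k : nat) (U : set 'rV[R]_n)
  (f : 'rV[R]_n -> V) : Prop :=
  forall s : seq 'I_n, (size s <= k)%N -> forall x, U x ->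
    {for x, continuous (ipderiv s f)} /\
    ((size s < k)%N -> forall i, derivable (ipderiv s f) x (ebasis i)).

Definition grad {n : nat} (f : 'rV[R]_n -> R) (x : 'rV[R]_n) : 'rV[R]_n :=
  \row_j pderiv j f x.
Definition jac {n m : nat} (c : 'I_m -> 'rV[R]_n -> R) (x : 'rV[R]_n) : 'M[R]_(m, n) :=
  \matrix_(i, j) pderiv j (c i) x.

Definition lagr {n m : nat} (f : 'rV[R]_n -> R) (c : 'I_m -> 'rV[R]_n -> R)
  (lam : 'rV[R]_m) : 'rV[R]_n -> R := fun x => f x - \sum_(i < m) lam 0 i * c i x.
Definition hessL {n m : nat} (f : 'rV[R]_n -> R) (c : 'I_m -> 'rV[R]_n -> R)
  (x : 'rV[R]_n) (lam : 'rV[R]_m) : 'M[R]_n :=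
  \matrix_(i, j) pderiv i (pderiv j (lagr f c lam)) x.

(* The constraints are indexed by 'I_m; the inequality indices form the set I,
   the equality indices are E := ~: I. *)
Definition active {n m : nat} (I : {set 'I_m}) (c : 'I_m -> 'rV[R]_n -> R)
  (x : 'rV[R]_n) (i : 'I_m) : Prop := i \notin I \/ c i x = 0.

Definition KKT {n m : nat} (I : {set 'I_m}) (f : 'rV[R]_n -> R)
  (c : 'I_m -> 'rV[R]_n -> R) (x : 'rV[R]_n) (lam : 'rV[R]_m) : Prop :=
  [/\ grad f x = lam *m jac c x,
      (forall i, i \in I -> 0 <= c i x /\ 0 <= lam 0 i /\ lam 0 i * c i x = 0)
    & (forall i, i \notin I -> c i x = 0)].

Definition LICQ {n m : nat} (I : {set 'I_m}) (c : 'I_m -> 'rV[R]_n -> R)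
  (x : 'rV[R]_n) : Prop :=
  forall a : 'I_m -> R, (forall i, ~ active I c x i -> a i = 0) ->
    \sum_(i < m) a i *: row i (jac c x) = 0 -> forall i, a i = 0.

Definition strict_compl {n m : nat} (I : {set 'I_m}) (c : 'I_m -> 'rV[R]_n -> R)
  (x : 'rV[R]_n) (lam : 'rV[R]_m) : Prop :=
  forall i, i \in I -> c i x = 0 -> 0 < lam 0 i.

Definition SSOSC {n m : nat} (I : {set 'I_m}) (f : 'rV[R]_n -> R)
  (c : 'I_m -> 'rV[R]_n -> R) (x : 'rV[R]_n) (lam : 'rV[R]_m) : Prop :=
  exists2 omega : R, 0 < omega &
    forall p : 'rV[R]_n,
      (forall i, active I c x i -> (p *m (row i (jac c x))^T) 0 0 = 0) ->
      omega * norm2 p ^+ 2 <= (p *m hessL f c x lam *m p^T) 0 0.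

Definition wx {n m : nat} (w : 'rV[R]_(n + m)) : 'rV[R]_n := lsubmx w.
Definition wl {n m : nat} (w : 'rV[R]_(n + m)) : 'rV[R]_m := rsubmx w.

(* F^mu(x,lambda) = (g - A^T lambda ; C_I lambda_I - mu e ; c_E).
   The last m components are indexed by the constraint index i : 'I_m
   (component c_i lambda_i - mu for i in I, c_i for i in E). *)
Definition Fmu {n m : nat} (I : {set 'I_m}) (f : 'rV[R]_n -> R)
  (c : 'I_m -> 'rV[R]_n -> R) (mu : R) (w : 'rV[R]_(n + m)) : 'rV[R]_(n + m) :=
  row_mx (grad f (wx w) - wl w *m jac c (wx w))
         (\row_i (if i \in I then c i (wx w) * wl w 0 i - mu else c i (wx w))).

Definition eI {n m : nat} (I : {set 'I_m}) : 'rV[R]_(n + m) :=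
  row_mx 0 (\row_i (if i \in I then 1 else 0)).

Definition nml {k : nat} (r : 'rV[R]_k) : 'rV[R]_k :=
  if r == 0 then 0 else (norm2 r)^-1 *: r.

Definition wpath {n m : nat} (I : {set 'I_m}) (W : 'rV[R]_(n + m) -> 'rV[R]_(n + m))
  (mu : R) (r : 'rV[R]_(n + m)) : R -> 'rV[R]_(n + m) :=
  fun rho => W (rho *: nml r + mu *: eI I).

Definition taylor {V : normedModType R} (p : nat) (g : R -> V) (a t : R) : V :=
  \sum_(j < p.+1) (((t - a) ^+ j) / (j`!)%:R) *: derive1n j g a.

Definition wstar_p {n m : nat} (I : {set 'I_m}) (f : 'rV[R]_n -> R)
  (c : 'I_m -> 'rV[R]_n -> R) (W : 'rV[R]_(n + m) -> 'rV[R]_(n + m))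
  (p : nat) (mu : R) (w : 'rV[R]_(n + m)) : 'rV[R]_(n + m) :=
  let r := Fmu I f c mu w in taylor p (wpath I W mu r) (norm2 r) 0.

End Defs.

From HB Require Import structures.
From mathcomp Require Import all_boot all_order all_algebra.
From mathcomp Require Import all_classical all_reals all_analysis.
From mathcomp Require Import ring.
Import Order.TTheory GRing.Theory Num.Theory.
Import numFieldNormedType.Exports.
Local Open Scope ring_scope.
Local Open Scope classical_set_scope.

(* For an affine equality constraint, c_i(x) = c_i(0) + a x, the (n+i)-th
   component of F^0(x, lambda) is c_i(x); so F^0(W y) = y says that c_i vanishes
   at W y exactly when y_{n+i} = 0. On the line rho |-> rho nml(r) + mu e_I, whose
   (n+i)-th component is rho nml(r)_{n+i} since i is an equality index, the map
   rho |-> c_i(x(W(rho nml(r) + mu e_I))) is therefore affine and vanishes at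
   rho = 0. Taylor polynomials commute with the linear part of c_i and reproduce
   affine functions exactly, so the Taylor predictor at rho = 0 satisfies c_i = 0.
   The point rho = |r| of the line is F^0(w_{k+1}), which lies in the domain of W
   for large k in K because F^0 is continuous and vanishes at w*. Differentiating
   W along the line uses that continuous partial derivatives give directional
   derivatives, proved with the mean value theorem one coordinate at a time. *)

Lemma continuous_sum {R : realType} {T : topologicalType} (k : nat)
    (F : 'I_k -> T -> R) :
  (forall i, continuous (F i)) -> continuous (fun x => \sum_(i < k) F i x).
Proof.
by move=> cF; apply: continuous_big => //; exact: add_continuous.
Qed.

Section Norm2.
Context {R : realType} {k : nat}.
Implicit Type r : 'rV[R]_k.

Lemma entry_le_mxnorm r i : `|r 0 i| <= `|r|.
Proof. by rewrite [leRHS]/Num.Def.normr/= mx_normrE (le_bigmax _ _ (0, i)). Qed.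

Lemma entry_le_norm2 r i : `|r 0 i| <= norm2 r.
Proof.
rewrite /norm2 -sqrtr_sqr; apply: ler_wsqrtr.
by rewrite (bigD1 i) //= lerDl; apply: sumr_ge0 => j _; exact: sqr_ge0.
Qed.

Lemma mxnorm_le_norm2 r : `|r| <= norm2 r.
Proof.
rewrite [leLHS]/Num.Def.normr/= mx_normrE.
apply: bigmax_le => [|[i j] _]; first by rewrite sqrtr_ge0.
by rewrite /= (ord1 i); apply: entry_le_norm2.
Qed.

Lemma norm2_eq0 r : norm2 r = 0 -> r = 0.
Proof.
move=> r0; apply/rowP => i; rewrite mxE; apply/normr0_eq0/eqP.
by rewrite eq_le normr_ge0 andbT -r0 entry_le_norm2.
Qed.

Lemma norm2_scale_nml r : norm2 r *: nml r = r.
Proof.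
rewrite /nml; case: eqP => [->|r0]; first by rewrite scaler0.
by rewrite scalerA mulfV ?scale1r //; apply: contra_not_neq r0 => /norm2_eq0.
Qed.

Lemma continuous_norm2 : continuous (@norm2 R k).
Proof.
move=> r; apply: continuous_comp; last exact: sqrt_continuous.
by apply: continuous_sum => i y; apply: continuousM; exact: coord_continuous.
Qed.

Lemma open_norm2_lt (delta : R) :
  open [set r : 'rV[R]_k | norm2 r < delta].
Proof.
apply: (@open_comp _ _ norm2 [set x : R | x < delta]) => [r _|].
  exact: continuous_norm2.
exact: open_lt.
Qed.

End Norm2.

Section RealDerivatives.
Context {R : realType}.

Lemma MVT_from0 (phi D : R -> R) b :
  (forall t, `|t| <= `|b| -> is_derive t (1 : R) phi (D t)) ->
  exists2 th, `|th| <= `|b| & phi b - phi 0 = D th * b.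
Proof.
move=> dphi.
have MVT_in a c : a <= c -> (forall t, a <= t <= c -> `|t| <= `|b|) ->
    exists2 th, `|th| <= `|b| & phi c - phi a = D th * (c - a).
  move=> ac acb.
  have dphi_in t : a <= t <= c -> is_derive t (1 : R) phi (D t) by move/acb/dphi.
  have dphi_oo t : t \in `]a, c[%R -> is_derive t (1 : R) phi (D t).
    by rewrite in_itv /= => /andP[ta tc]; apply: dphi_in; rewrite !ltW.
  have cphi : {within `[a, c], continuous phi}.
    by apply: derivable_within_continuous => t; rewrite in_itv /= => /dphi_in[].
  have [th thin ->] := MVT_segment ac dphi_oo cphi.
  by exists th => //; apply: acb; move: thin; rewrite in_itv.
have [b0|b0] := leP 0 b.
  have [|th thb ->] := MVT_in 0 b b0; last by exists th; rewrite ?subr0.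
  by move=> t /andP[t0 tb]; rewrite !ger0_norm // (le_trans t0 tb).
have [|th thb E] := MVT_in b 0 (ltW b0).
  by move=> t /andP[bt t0]; rewrite !ler0_norm ?lerN2 // ltW.
by exists th => //; rewrite -opprB E sub0r mulrN opprK.
Qed.

Lemma is_derive_along_line {V W : normedModType R} {F : V -> W} {e y : V} {t : R} {D : W} :
  is_derive (t *: e + y) e F D -> is_derive t (1 : R) (fun s : R => F (s *: e + y)) D.
Proof.
case=> dF FD.
have quotientE : (fun h : R => h^-1 *: (((fun s => F (s *: e + y)) \o shift t) (h *: 1)
    - F (t *: e + y))) =
  (fun h => h^-1 *: ((F \o shift (t *: e + y)) (h *: e) - F (t *: e + y))).
  by apply/funext => h; rewrite /= [_%:A]mulr1 scalerDl addrA.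
by split; rewrite /derivable /derive quotientE.
Qed.

Lemma is_derive_from_increment {V W : normedModType R} (F : V -> W) x v L :
  (forall e, 0 < e -> exists2 eta, 0 < eta & forall h : R, `|h| < eta ->
     `|F (h *: v + x) - F x - h *: L| <= e * `|h|) ->
  is_derive x v F L.
Proof.
move=> incrF.
have FL : (fun h : R => h^-1 *: ((F \o shift x) (h *: v) - F x)) @ 0^' --> L.
  apply/cvgrPdist_le => e e0; have [eta eta0 incr_eta] := incrF e e0.
  near=> h.
  have h0 : h != 0 by near: h; exact: nbhs_dnbhs_neq.
  have /incr_eta : `|h| < eta by near: h; exact: dnbhs0_lt.
  have -> : L - h^-1 *: ((F \o shift x) (h *: v) - F x) =
      h^-1 *: (h *: L - (F (h *: v + x) - F x)).
    by rewrite [RHS]scalerBr scalerA mulVf // scale1r.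
  by rewrite normrZ normfV ler_pdivrMl ?normr_gt0 // distrC mulrC.
apply: DeriveDef; first by apply/cvg_ex; exists L.
exact: cvg_lim.
Unshelve. all: by end_near.
Qed.

End RealDerivatives.

Section ContinuousPartials.
Context {R : realType} {N : nat}.
Implicit Types (x v : 'rV[R]_N) (h : R).

(* [stair x v h] walks from [x] to [x + h v], changing one coordinate per step. *)
Definition stair x v h (k : nat) : 'rV[R]_N :=
  x + h *: \row_j (if (j < k)%N then v 0 j else 0).

Lemma stair0 x v h : stair x v h 0 = x.
Proof.
rewrite /stair (_ : \row_j _ = 0) ?scaler0 ?addr0 //.
by apply/rowP => j; rewrite !mxE.
Qed.

Lemma stairN x v h : stair x v h N = h *: v + x.
Proof.
rewrite /stair addrC; congr (_ *: _ + _).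
by apply/rowP => j; rewrite !mxE ltn_ord.
Qed.

Lemma stairS x v h (k : 'I_N) :
  stair x v h k.+1 = (h * v 0 k) *: ebasis k + stair x v h k.
Proof.
rewrite /stair addrCA; congr (_ + _); apply/rowP => j; rewrite !mxE /= ltnS leq_eqVlt.
have [->|jk] := eqVneq j k; first by rewrite ltnn eqxx mulr1 mulr0 addr0.
by rewrite mulr0 add0r (_ : (j == k :> nat) = false) //; apply/negbTE.
Qed.

Lemma stair_segment_near x v h (k : 'I_N) t : `|t| <= `|h * v 0 k| ->
  `|t *: ebasis k + stair x v h k - x| <= `|h| * `|v|.
Proof.
move=> t_le; rewrite /stair (addrC x) addrA addrK [leLHS]/Num.Def.normr/= mx_normrE.
apply: bigmax_le => [|[i j] _]; first by rewrite mulr_ge0.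
rewrite (ord1 i) /= !mxE /=.
have [->|jk] := eqVneq j k.
  by rewrite ltnn mulr0 addr0 mulr1 (le_trans t_le) // normrM ler_wpM2l // entry_le_mxnorm.
rewrite mulr0 add0r; case: ifP => _; last by rewrite mulr0 normr0 mulr_ge0.
by rewrite normrM ler_wpM2l // entry_le_mxnorm.
Qed.

Lemma stair_increment_le (H : 'rV[R]_N -> R) (D : 'I_N -> 'rV[R]_N -> R) x v h e :
  0 <= e ->
  (forall y, `|y - x| <= `|h| * `|v| ->
     forall j, is_derive y (ebasis j) H (D j y) /\ `|D j y - D j x| <= e) ->
  `|H (h *: v + x) - H x - h * \sum_j v 0 j * D j x| <= e * (N%:R * `|v| * `|h|).
Proof.
move=> e0 near_x.
have step (k : 'I_N) : `|H (stair x v h k.+1) - H (stair x v h k) - h * (v 0 k * D k x)|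
    <= e * (`|h| * `|v 0 k|).
  pose z t := t *: ebasis k + stair x v h k.
  have near_z t : `|t| <= `|h * v 0 k| -> forall j,
      is_derive (z t) (ebasis j) H (D j (z t)) /\ `|D j (z t) - D j x| <= e.
    by move=> t_le; apply: near_x; apply: stair_segment_near.
  have [th th_le E] : exists2 th, `|th| <= `|h * v 0 k| &
      H (z (h * v 0 k)) - H (z 0) = D k (z th) * (h * v 0 k).
    apply: (@MVT_from0 _ (fun t => H (z t)) (fun t => D k (z t))) => t.
    by move=> /near_z /(_ k) [/is_derive_along_line].
  have -> : stair x v h k.+1 = z (h * v 0 k) by rewrite stairS.
  have -> : stair x v h k = z 0 by rewrite /z scale0r add0r.
  rewrite E (_ : _ - _ = (D k (z th) - D k x) * (h * v 0 k)); last by ring.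
  by rewrite normrM -(normrM h) ler_wpM2r // (near_z th th_le k).2.
have -> : H (h *: v + x) - H x =
    \sum_(k < N) (H (stair x v h k.+1) - H (stair x v h k)).
  rewrite -(big_mkord xpredT (fun k => H (stair x v h k.+1) - H (stair x v h k))).
  by rewrite telescope_sumr // stairN stair0.
rewrite mulr_sumr -sumrB; apply: le_trans (ler_norm_sum _ _ _) _.
apply: le_trans (ler_sum _ (fun k _ => step k)) _.
rewrite -mulr_sumr ler_wpM2l //.
have -> : N%:R * `|v| * `|h| = \sum_(k < N) `|h| * `|v|.
  by rewrite sumr_const card_ord -mulr_natl; ring.
by apply: ler_sum => k _; rewrite ler_wpM2l // entry_le_mxnorm.
Qed.

Lemma is_derive_continuous_partials (H : 'rV[R]_N -> R) (D : 'I_N -> 'rV[R]_N -> R)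
    (U : set 'rV[R]_N) x v :
  nbhs x U ->
  (forall j y, U y -> is_derive y (ebasis j) H (D j y)) ->
  (forall j, {for x, continuous (D j)}) ->
  is_derive x v H (\sum_j v 0 j * D j x).
Proof.
move=> xU dH cD; apply: is_derive_from_increment => e e0.
have Nv0 : 0 < N%:R * `|v| + 1 by rewrite ltr_wpDl // mulr_ge0.
pose e' := e / (N%:R * `|v| + 1).
have e'0 : 0 < e' by rewrite divr_gt0.
have : \forall y \near x, U y /\ forall j, `|D j y - D j x| <= e'.
  near=> y; split; first by near: y.
  near: y; apply: filter_forall => j; near=> y; rewrite distrC; near: y.
  exact: (cvgrPdist_le _ _).1 (cD j) e' e'0.
case/nbhs_ballP => rho rho0 near_x.
have v0 : 0 < `|v| + 1 by rewrite ltr_wpDl.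
exists (rho / (`|v| + 1)); first by rewrite divr_gt0.
move=> h h_lt.
have hv : `|h| * `|v| < rho.
  rewrite (le_lt_trans _ (_ : `|h| * (`|v| + 1) < rho)) -?ltr_pdivlMr //.
  by rewrite ler_wpM2l // lerDl.
apply: le_trans (stair_increment_le H D x v h e' (ltW e'0) _) _.
  move=> y yx j; have [Uy Dy] : U y /\ forall j, `|D j y - D j x| <= e'.
    by apply: near_x; rewrite -ball_normE /ball_ /= distrC (le_lt_trans yx).
  by split; [exact: dH | exact: Dy].
rewrite mulrA ler_wpM2r // /e' mulrAC ler_pdivrMr // ler_wpM2l ?ltW //.
by rewrite ltrDl.
Unshelve. all: by end_near.
Qed.

Lemma is_derive_mx_continuous_partials {p q : nat} (G : 'rV[R]_N -> 'M[R]_(p, q))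
    (U : set 'rV[R]_N) x v :
  nbhs x U ->
  (forall j y, U y -> derivable G y (ebasis j)) ->
  (forall j, {for x, continuous (fun y => derive G y (ebasis j))}) ->
  is_derive x v G (\sum_j v 0 j *: derive G x (ebasis j)).
Proof.
move=> xU dG cG.
have dGik i k : is_derive x v (fun y => G y i k)
    (\sum_j v 0 j * derive G x (ebasis j) i k).
  apply: (is_derive_continuous_partials (fun y => G y i k)
    (fun j y => derive G y (ebasis j) i k) U x v xU).
    move=> j y Uy; apply: DeriveDef; first exact: (derivable_mxP _ _ _).1 (dG j y Uy) i k.
    by rewrite (derive_mx (dG j y Uy)) mxE.
  move=> j; apply: (@continuous_comp _ _ _ (fun y => derive G y (ebasis j))
    (fun A : 'M[R]_(p, q) => A i k)) => //.
  exact: coord_continuous.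
have dGx : derivable G x v by apply/derivable_mxP => i k; case: (dGik i k).
apply: DeriveDef => //; apply/matrixP => i k; rewrite derive_mx // !mxE.
have [_ ->] := dGik i k.
by rewrite summxE; apply: eq_bigr => j _; rewrite mxE.
Qed.

Lemma constant_partials_affine {h : 'rV[R]_N -> R} {a : 'rV[R]_N} :
  (forall y j, is_derive y (ebasis j) h (a 0 j)) ->
  forall y, h y = h 0 + \sum_j a 0 j * y 0 j.
Proof.
move=> dh y.
have dline t : is_derive (t *: y + 0) y h (\sum_j y 0 j * a 0 j).
  apply: (is_derive_continuous_partials h (fun j _ => a 0 j) setT) => //.
  - exact: filterT.
  - by move=> j; exact: cst_continuous.
have [th _] := @MVT_from0 _ (fun t => h (t *: y + 0)) (fun=> \sum_j y 0 j * a 0 j) 1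
  (fun t _ => is_derive_along_line (dline t)).
rewrite scale1r scale0r !addr0 mulr1 => /eqP; rewrite subr_eq addrC => /eqP ->.
by congr (_ + _); apply: eq_bigr => j _; rewrite mulrC.
Qed.

End ContinuousPartials.

Lemma open_line_preimage {R : realType} {V : normedModType R} (U : set V) (v b : V) :
  open U -> open [set t : R | U (t *: v + b)].
Proof.
move=> oU; apply: (open_comp (f := fun t : R => t *: v + b)) => // t _.
rewrite (_ : (fun t => t *: v + b) = *:%R^~ v + cst b) //.
by apply: continuousD; [exact: scalel_continuous | exact: cst_continuous].
Qed.

Section RowFunctional.
Context {R : realType} {M : nat}.

Definition vdot (a w : 'rV[R]_M) : R := \sum_l a 0 l * w 0 l.

Lemma vdot_sum (a : 'rV[R]_M) (K : nat) (c : 'I_K -> R) (X : 'I_K -> 'rV[R]_M) :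
  vdot a (\sum_j c j *: X j) = \sum_j c j * vdot a (X j).
Proof.
rewrite /vdot (eq_bigr (fun l => \sum_j a 0 l * (c j * X j 0 l))) => [|l _]; last first.
  by rewrite summxE mulr_sumr; apply: eq_bigr => j _; rewrite mxE.
rewrite exchange_big; apply: eq_bigr => j _; rewrite mulr_sumr.
by apply: eq_bigr => l _; rewrite mulrCA.
Qed.

Lemma is_derive_vdot (a : 'rV[R]_M) {g : R -> 'rV[R]_M} {r : R} : derivable g r 1 ->
  is_derive r (1 : R) (fun t => vdot a (g t)) (vdot a (derive1 g r)).
Proof.
move=> dg; rewrite /vdot -fct_sumE; apply: is_derive_sum => l; apply: is_deriveZ.
apply: DeriveDef; first exact: (derivable_mxP _ _ _).1 dg 0 l.
by rewrite derive1E (derive_mx dg) mxE.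
Qed.

End RowFunctional.

Section LineDerivatives.
Context {R : realType} {N M : nat} {W : 'rV[R]_N -> 'rV[R]_M} {U : set 'rV[R]_N}
  {q : nat}.
Hypothesis oU : open U.
Hypothesis CkW : Ck q U W.
Variables (v b : 'rV[R]_N).

Lemma is_derive_ipderiv s y : (size s < q)%N -> U y ->
  is_derive y v (ipderiv s W) (\sum_j v 0 j *: ipderiv (j :: s) W y).
Proof.
move=> sq Uy; apply: (is_derive_mx_continuous_partials _ U) => [|j z Uz|j].
- exact: oU.
- exact: (CkW s (ltnW sq) z Uz).2 sq j.
- exact: (CkW (j :: s) sq y Uy).1.
Qed.

(* The k-th derivative along [v] of [ipderiv s W], expanded into partial
   derivatives of order [size s + k]. *)
Fixpoint iter_dirderiv (k : nat) (s : seq 'I_N) : 'rV[R]_N -> 'rV[R]_M :=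
  if k is k'.+1 then fun y => \sum_j v 0 j *: iter_dirderiv k' (j :: s) y
  else ipderiv s W.

Lemma is_derive_iter_dirderiv k s y : (size s + k < q)%N -> U y ->
  is_derive y v (iter_dirderiv k s) (iter_dirderiv k.+1 s y).
Proof.
elim: k s y => [|k IHk] s y skq Uy; first by rewrite addn0 in skq; exact: is_derive_ipderiv.
rewrite [iter_dirderiv k.+1 s]/= -fct_sumE; apply: is_derive_sum => j.
by apply: is_deriveZ; apply: IHk; rewrite // /= addSnnS.
Qed.

Lemma derive1n_line k : (k <= q)%N -> forall r, U (r *: v + b) ->
  derive1n k (fun t => W (t *: v + b)) r = iter_dirderiv k [::] (r *: v + b).
Proof.
elim: k => [|k IHk] kq r Ur; first by rewrite derive1n0.
have Ur_near : \forall t \near r, U (t *: v + b) by exact: open_line_preimage.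
rewrite derive1nS derive1E
  (@near_eq_derive R R _ _ (fun t : R => iter_dirderiv k [::] (t *: v + b))).
  by have [_ ->] := is_derive_along_line (is_derive_iter_dirderiv k [::] _ kq Ur).
by near=> t; apply: IHk; [exact: ltnW | near: t].
Unshelve. all: by end_near.
Qed.

Lemma derivable_derive1n_line k : (k < q)%N -> forall r, U (r *: v + b) ->
  derivable (derive1n k (fun t => W (t *: v + b))) r 1.
Proof.
move=> kq r Ur.
have Ur_near : \forall t \near r, U (t *: v + b) by exact: open_line_preimage.
apply: (@near_eq_derivable R R _ (fun t : R => iter_dirderiv k [::] (t *: v + b))).
  by near=> t; apply/esym/derive1n_line; [exact: ltnW | near: t].
by have [] := is_derive_along_line (is_derive_iter_dirderiv k [::] _ kq Ur).
Unshelve. all: by end_near.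
Qed.

Lemma derive1n_vdot_line (a : 'rV[R]_M) k : (k <= q)%N -> forall r, U (r *: v + b) ->
  derive1n k (fun t => vdot a (W (t *: v + b))) r =
  vdot a (derive1n k (fun t => W (t *: v + b)) r).
Proof.
elim: k => [|k IHk] kq r Ur; first by rewrite !derive1n0.
have Ur_near : \forall t \near r, U (t *: v + b) by exact: open_line_preimage.
rewrite derive1nS derive1E (@near_eq_derive R R _ _
  (fun t : R => vdot a (derive1n k (fun t => W (t *: v + b)) t))).
  by have [_ ->] := is_derive_vdot a (derivable_derive1n_line k kq r Ur); rewrite derive1nS.
by near=> t; apply: IHk; [exact: ltnW | near: t].
Unshelve. all: by end_near.
Qed.

End LineDerivatives.

Section Taylor.
Context {R : realType}.

Lemma derive1n_affine {phi : R -> R} {J : set R} {al be : R} :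
  open J -> (forall t, J t -> phi t = al * t + be) ->
  forall k r, J r -> derive1n k.+1 phi r = if k == 0%N then al else 0.
Proof.
move=> oJ phiJ; elim=> [|k IHk] r Jr; rewrite derive1nS derive1E.
  rewrite derive1n0 (@near_eq_derive R R _ phi (fun t : R => al * t + be)).
    rewrite (_ : (fun t : R => al * t + be) = al \*: id + cst be) //.
    by rewrite deriveD // deriveZ // derive_id derive_cst addr0 [_%:A]mulr1.
  by near=> t; apply: phiJ; near: t; exact: oJ.
rewrite (@near_eq_derive R R _ _ (cst (if k == 0%N then al else 0))) ?derive_cst //.
by near=> t; apply: IHk; near: t; exact: oJ.
Unshelve. all: by end_near.
Qed.

Lemma taylor_affine {phi : R -> R} {J : set R} {al be : R} {p : nat} {r t : R} :
  (0 < p)%N -> open J -> J r -> (forall s, J s -> phi s = al * s + be) ->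
  taylor p phi r t = al * t + be.
Proof.
case: p => // p _ oJ Jr phiJ.
rewrite /taylor 2!big_ord_recl big1 => [|j _]; last first.
  by rewrite (derive1n_affine oJ phiJ j.+1 r Jr) scaler0.
rewrite derive1n0 (derive1n_affine oJ phiJ 0 r Jr) phiJ //= expr0 expr1 fact0.
by rewrite factS fact0 muln1 !divr1 addr0 /GRing.scale /=; ring.
Qed.

Lemma taylor_vdot {M : nat} (a : 'rV[R]_M) (g : R -> 'rV[R]_M) p r t :
  (forall j, (j <= p)%N ->
     derive1n j (fun s => vdot a (g s)) r = vdot a (derive1n j g r)) ->
  vdot a (taylor p g r t) = taylor p (fun s => vdot a (g s)) r t.
Proof.
by move=> dg; rewrite /taylor vdot_sum; apply: eq_bigr => j _; rewrite dg // -ltnS.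
Qed.

End Taylor.

Section Residual.
Context {R : realType} {n m : nat} (I : {set 'I_m}) (f : 'rV[R]_n -> R)
  (c : 'I_m -> 'rV[R]_n -> R).

Lemma Fmu_shift mu w : Fmu I f c mu w + mu *: eI I = Fmu I f c 0 w :> 'rV[R]_(n + m).
Proof.
rewrite /Fmu /eI scale_row_mx scaler0 add_row_mx addr0; congr row_mx.
apply/rowP => i; rewrite !mxE.
by case: ifP => _; rewrite ?mulr1 ?subr0 ?subrK ?mulr0 ?addr0.
Qed.

Lemma Fmu0_equality_coord w i : i \notin I -> Fmu I f c 0 w 0 (rshift n i) = c i (wx w).
Proof. by move=> iI; rewrite /Fmu row_mxEr mxE (negbTE iI). Qed.

Lemma eI_equality_coord i : i \notin I -> (eI I : 'rV[R]_(n + m)) 0 (rshift n i) = 0.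
Proof. by move=> iI; rewrite /eI row_mxEr mxE (negbTE iI). Qed.

Lemma Fmu0_KKT xs lams : KKT I f c xs lams -> Fmu I f c 0 (row_mx xs lams) = 0.
Proof.
case=> gradE compl eqE; rewrite /Fmu /wx /wl row_mxKl row_mxKr gradE subrr -row_mx0.
congr row_mx; apply/rowP => i; rewrite !mxE; case: ifP => iI.
  by have [_ [_ lc0]] := compl i iI; rewrite subr0 mulrC lc0.
by apply: eqE; rewrite iI.
Qed.

Lemma continuous_Fmu0_coord d i : (0 < d)%N -> Ck d setT f -> (forall i, Ck d setT (c i)) ->
  continuous (fun w : 'rV[R]_(n + m) => Fmu I f c 0 w 0 i).
Proof.
move=> d0 Ckf Ckc.
have cf j : continuous (pderiv j f) by move=> x; exact: (Ckf [:: j] d0 x Logic.I).1.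
have cc l : continuous (c l) by move=> x; exact: (Ckc l [::] (leq0n d) x Logic.I).1.
have cdc j l : continuous (pderiv j (c l)).
  by move=> x; exact: (Ckc l [:: j] d0 x Logic.I).1.
have cx := @continuous_lsubmx R 1 n m; have cl := @continuous_rsubmx R 1 n m.
have cl_coord l : continuous (fun w : 'rV[R]_(n + m) => wl w 0 l).
  by move=> w; exact: (continuous_comp (cl w) (@coord_continuous _ _ _ 0 l _)).
have ccx l : continuous (fun w : 'rV[R]_(n + m) => c l (wx w)).
  by move=> w; exact: (continuous_comp (cx w) (cc l _)).
case: (split_ordP i) => j ->.
  rewrite (_ : (fun w => _) = (pderiv j f \o wx) -
      (fun w => \sum_l ((fun w => wl w 0 l) \* (pderiv j (c l) \o wx)) w)); last first.
    apply/funext => w; rewrite /Fmu row_mxEl !mxE; congr (_ - _).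
    by apply: eq_bigr => l _; rewrite [jac _ _ _ _]mxE.
  move=> w; apply: continuousB; first exact: (continuous_comp (cx w) (cf j _)).
  apply: continuous_sum => l {}w; apply: continuousM; first exact: cl_coord.
  exact: (continuous_comp (cx w) (cdc j l _)).
rewrite (_ : (fun w => _) = if j \in I then fun w => c j (wx w) * wl w 0 j
    else fun w => c j (wx w)); last first.
  apply/funext => w; rewrite /Fmu row_mxEr !mxE.
  by case: ifP => _ /=; rewrite ?subr0 // /wl mxE.
by case: (j \in I) => // w; exact: (continuousM (ccx j w) (cl_coord j w)).
Qed.

Lemma wstar_p_affine_feasible (W : 'rV[R]_(n + m) -> 'rV[R]_(n + m))
    (U : set 'rV[R]_(n + m)) (q p : nat) (i : 'I_m) (a : 'rV[R]_n) mu w :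
  open U -> Ck q U W -> (forall r, U r -> Fmu I f c 0 (W r) = r) ->
  (0 < p <= q)%N -> i \notin I -> (forall x j, is_derive x (ebasis j) (c i) (a 0 j)) ->
  U (Fmu I f c 0 w) -> c i (wx (wstar_p I f c W p mu w)) = 0.
Proof.
move=> oU CkW FW /andP[p0 pq] iI dci Uw.
set r := Fmu I f c mu w; set v := nml r; pose b : 'rV[R]_(n + m) := mu *: eI I.
pose a' : 'rV[R]_(n + m) := row_mx a 0.
have ciE w' : c i (wx w') = c i 0 + vdot a' w'.
  rewrite (constant_partials_affine dci (wx w')) /vdot big_split_ord /=.
  rewrite [X in _ = _ + (_ + X)]big1 ?addr0.
    by congr (_ + _); apply: eq_bigr => l _; rewrite /a' row_mxEl /wx mxE.
  by move=> l _; rewrite /a' row_mxEr mxE mul0r.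
pose J := [set t : R | U (t *: v + b)].
have oJ : open J by exact: open_line_preimage.
have b0 : b 0 (rshift n i) = 0 by rewrite mxE eI_equality_coord ?mulr0.
have affine_on_line t : J t -> vdot a' (W (t *: v + b)) = v 0 (rshift n i) * t + - c i 0.
  move=> Jt; have := Fmu0_equality_coord (W (t *: v + b)) i iI.
  rewrite FW // ciE [LHS]mxE b0 addr0 mxE => E.
  by rewrite [_ * t]mulrC E addrAC subrr add0r.
have Jr : J (norm2 r).
  by rewrite /J /v /b /= (norm2_scale_nml r : norm2 r *: nml r = r) Fmu_shift.
rewrite ciE /wstar_p -/r taylor_vdot => [|j jp]; last first.
  exact: (derive1n_vdot_line oU CkW v b a' j (leq_trans jp pq) _ Jr).
by rewrite (taylor_affine p0 oJ Jr affine_on_line) mulr0 add0r subrr.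
Qed.

End Residual.

Lemma eventually_norm2_Fmu0_lt {R : realType} {n m : nat} (I : {set 'I_m})
    (f : 'rV[R]_n -> R) (c : 'I_m -> 'rV[R]_n -> R) (d : nat) xs lams
    (w : nat -> 'rV[R]_(n + m)) (K : set nat) (delta : R) :
  (0 < d)%N -> Ck d setT f -> (forall i, Ck d setT (c i)) -> KKT I f c xs lams ->
  0 < delta ->
  (forall e : R, 0 < e -> exists N, forall k, K k -> (N <= k)%N ->
     norm2 (w k - row_mx xs lams) < e) ->
  exists N, forall k, K k -> (N <= k)%N -> norm2 (Fmu I f c 0 (w k)) < delta.
Proof.
move=> d0 Ckf Ckc KKTs delta0 w_cvg.
have cF : continuous (fun w => norm2 (Fmu I f c 0 w)).
  rewrite /norm2 => w0; apply: continuous_comp; last exact: sqrt_continuous.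
  apply: continuous_sum => i {}w0; apply: continuousM;
    exact: (continuous_Fmu0_coord I f c d i d0 Ckf Ckc).
have : \forall w' \near row_mx xs lams, norm2 (Fmu I f c 0 w') < delta.
  apply: (cvgr_lt _ (cF _)).
  rewrite (Fmu0_KKT I f c xs lams KKTs) /norm2 big1 ?sqrtr0 // => i _.
  by rewrite mxE expr0n.
case/nbhs_ballP => eta eta0 F_lt; have [N wN] := w_cvg eta eta0.
exists N => k Kk kN; apply: F_lt; rewrite -ball_normE /ball_ /= distrC.
exact: le_lt_trans (mxnorm_le_norm2 _) (wN k Kk kN).
Qed.

Theorem proposition2 (R : realType) (n m d : nat)
  (I : {set 'I_m}) (f : 'rV[R]_n -> R) (c : 'I_m -> 'rV[R]_n -> R)
  (xs : 'rV[R]_n) (lams : 'rV[R]_m)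
  (W : 'rV[R]_(n + m) -> 'rV[R]_(n + m))
  (mu : nat -> R) (w : nat -> 'rV[R]_(n + m)) (eps : R -> R)
  (K : set nat) (p : nat) (EA : {set 'I_m}) :
  (3 <= d)%N ->
  Ck d setT f -> (forall i, Ck d setT (c i)) ->
  KKT I f c xs lams ->
  LICQ I c xs ->
  strict_compl I c xs lams ->
  SSOSC I f c xs lams ->
  (forall lam, KKT I f c xs lam -> lam = lams) ->
  (* W = w^{w*,0}: (d-1)-times continuously differentiable near 0,
     F^0(W(r)) = r near 0, W(0) = w* *)
  (exists2 delta : R, 0 < delta &
     Ck d.-1 [set r | norm2 r < delta] W /\
     (forall r, norm2 r < delta -> Fmu I f c 0 (W r) = r)) ->
  W 0 = row_mx xs lams ->
  (* eps positive with eps(mu) = Theta(mu) as mu -> 0 *)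
  (forall t, 0 < t -> 0 < eps t) ->
  (exists c1 c2 t0 : R, [/\ 0 < c1, 0 < c2, 0 < t0 &
     forall t, 0 < t < t0 -> c1 * t <= eps t <= c2 * t]) ->
  (forall k, 0 < mu k) -> (forall k, mu k.+1 < mu k) ->
  (forall k, norm2 (Fmu I f c (mu k) (w k.+1)) <= eps (mu k)) ->
  (forall N, exists k, (N <= k)%N /\ K k) ->
  (forall e : R, 0 < e -> exists N, forall k, K k -> (N <= k)%N ->
     norm2 (w k.+1 - row_mx xs lams) < e) ->
  (1 <= p <= d - 2)%N ->
  EA \subset ~: I ->
  (exists AEA : 'M[R]_(m, n), forall i, i \in EA -> forall x, row i (jac c x) = row i AEA) ->
  exists N, forall k, K k -> (N <= k)%N ->
    forall i, i \in EA -> c i (wx (wstar_p I f c W p (mu k.+1) (w k.+1))) = 0.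
Proof.
(* LICQ, strict complementarity, SSOSC and the assumptions on mu and eps are
   what make W exist. *)
move=> d3 Ckf Ckc KKTs _ _ _ _ [delta delta0 [CkW FW]] _ _ _ _ _ _ _ w_cvg
  /andP[p0 pd] EA_eq [A A_jac].
have d0 : (0 < d)%N by exact: leq_trans d3.
have [N FwN] := eventually_norm2_Fmu0_lt I f c d xs lams (fun k => w k.+1) K delta
  d0 Ckf Ckc KKTs delta0 w_cvg.
exists N => k Kk kN i iEA.
have iI : i \notin I by move/fintype.subsetP: EA_eq => /(_ i iEA); rewrite finset.in_setC.
apply: (wstar_p_affine_feasible I f c _ _ d.-1 _ _ (row i A) _ _
  (open_norm2_lt delta) CkW FW) => // [|x j|]; last exact: FwN.
  by rewrite p0 /= (leq_trans pd) // -subn1 leq_sub2l.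
apply: DeriveDef; first exact: (Ckc i [::] (leq0n d) x Logic.I).2 d0 j.
by have /rowP/(_ j) := A_jac i iEA x; rewrite !mxE.
Qed.
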